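(* Let $b\ge 2$ and $n\ge 0$ be integers. If $x\in T_b(n)$ and $x\not\equiv 0 \pmod{s_0}$, then $x-(b-1)\in T_b(n)$.
   Context: For integers $b\ge 2$, $n\ge 0$, $i\ge0$ put $s_i=(b+1)b^{n+i}-1$ and $T_b(n)=\langle\{s_i:i\in\mathbb{N}\}\rangle$, the submonoid of $(\mathbb{N},+)$ generated by the $s_i$ (equivalently, by $s_0,\dots,s_{n+1}$). *)

From mathcomp Require Import all_boot.
Set Implicit Arguments.
Unset Strict Implicit.
Unset Printing Implicit Defensive.

Definition s (b n i : nat) : nat := (b + 1) * b ^ (n + i) - 1.

Inductive inT (b n : nat) : nat -> Prop :=
  | inT0 : inT b n 0
  | inT_gen : forall i, inT b n (s b n i)
  | inT_add : forall x y, inT b n x -> inT b n y -> inT b n (x + y).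

From mathcomp Require Import all_boot.
From mathcomp Require Import zify.

(* An element of T_b(n) that is not a multiple of s_0 uses some generator
   s_(j+1); since s_(j+1) - (b-1) = b s_j, trading that generator for b
   copies of s_j lowers the element by exactly b - 1 and stays in T_b(n). *)

Lemma inT_muln {b n y} k : inT b n y -> inT b n (k * y).
Proof.
move=> Ty; elim: k => [|k IHk]; first exact: inT0.
by rewrite mulSn; apply: inT_add.
Qed.

Lemma inT_mul_s0_or_gen_succ b n x : inT b n x ->
  (exists k, x = k * s b n 0) \/
  (exists j y, inT b n y /\ x = s b n j.+1 + y).
Proof.
elim=> [|[|j]|x1 x2 _ [[k1 ->]|[j [y [Ty ->]]]] _ [[k2 ->]|[j2 [y2 [Ty2 ->]]]]].
- by left; exists 0.
- by left; exists 1; rewrite mul1n.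
- by right; exists j, 0; rewrite addn0; split; first exact: inT0.
- by left; exists (k1 + k2); rewrite mulnDl.
- right; exists j2, (k1 * s b n 0 + y2); split; last by rewrite addnCA.
  exact: inT_add (inT_muln _ (inT_gen _ _ _)) Ty2.
- right; exists j, (y + k2 * s b n 0); split; last by rewrite !addnA.
  exact: inT_add Ty (inT_muln _ (inT_gen _ _ _)).
- right; exists j, (y + (s b n j2.+1 + y2)); split; last by rewrite !addnA.
  exact: inT_add Ty (inT_add (inT_gen _ _ _) Ty2).
Qed.

Lemma s_succ_sub b n j : s b n j.+1 - (b - 1) = b * s b n j.
Proof.
rewrite /s (addnS n j) expnS.
case: b => [|b]; first by rewrite !mul0n.
have : 0 < b.+1 ^ (n + j) by rewrite expn_gt0.
set P := b.+1 ^ (n + j); nia.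
Qed.

Theorem mainTheorem7 (b n x : nat) (hb : 2 <= b) :
  inT b n x -> x %% s b n 0 != 0 -> inT b n (x - (b - 1)).
Proof.
case/inT_mul_s0_or_gen_succ=> [[k ->]|[j [y [Ty ->]]]].
  by rewrite modnMl eqxx.
have le_b1_s : b - 1 <= s b n j.+1.
  have : 0 < b ^ (n + j.+1) by rewrite expn_gt0 ltnW.
  rewrite /s; nia.
rewrite addnC -addnBA // s_succ_sub => _.
exact: inT_add Ty (inT_muln _ (inT_gen _ _ _)).
Qed.
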